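(* Let $V$ be a vector configuration of rank $r$. For every $s$ with $1\le s\le r-1$ there exists a subconfiguration $W\subseteq V$ of rank $s$ such that $\mathrm{DD}(V)=\mathrm{DD}(W)+\mathrm{DD}(V/W)$.
   Context: A vector configuration is a finite family (repetitions allowed) $U$ of vectors in a real vector space $E$; a subconfiguration is a subfamily, $\operatorname{rank}(U)=\dim\operatorname{lin}(U)$, cardinalities count multiplicities. The quotient $V/W$ is the configuration in $E/\operatorname{lin}(W)$ of the images of the elements of $V\setminus W$. Covector discrepancy: $\mathrm{DD}(U)=\max_f\big|\,|\{u\in U: f(u)>0\}|-|\{u\in U:f(u)<0\}|\,\big|$ over all linear functionals $f$ on $E$. *)

From HB Require Import structures.
From mathcomp Require Import all_boot all_order all_algebra.
From mathcomp Require Import boolp reals.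
Set Implicit Arguments. Unset Strict Implicit. Unset Printing Implicit Defensive.
Import Order.TTheory GRing.Theory Num.Theory.
Local Open Scope ring_scope.

(* A vector configuration is a family [U : J -> 'rV[R]_m] indexed by a finite
   type [J] (repetitions allowed); a subconfiguration is given by a subset
   [A : {set J}] of indices.  Linear functionals on 'rV_m are [u |-> (u *m c) 0 0]
   for column vectors [c]. *)

Section Config.
Variable R : realType.

Definition disc (m : nat) (J : finType) (A : {set J}) (U : J -> 'rV[R]_m)
  (c : 'cV[R]_m) : nat :=
  let npos := #|[set j in A | 0 < (U j *m c) ord0 ord0]| in
  let nneg := #|[set j in A | (U j *m c) ord0 ord0 < 0]| in
  `|npos - nneg|%N.

(* covector discrepancy: the maximum of [disc] over all linear functionals
   (the values are bounded by #|J|, so this max over a finite range is the max). *)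
Definition DD (m : nat) (J : finType) (A : {set J}) (U : J -> 'rV[R]_m) : nat :=
  (\max_(k < #|J|.+1 | `[< exists c : 'cV[R]_m, disc A U c = k >]) k)%N.

Definition crank (m : nat) (J : finType) (A : {set J}) (U : J -> 'rV[R]_m) : nat :=
  \rank (\sum_(j in A) <<U j>>)%MS.

(* The quotient V/W, W = (V j)_{j in S}: the images of V j, j notin S, under the
   linear map u |-> u *m cokermx (lin W), whose kernel is exactly lin(W)
   (submxE); its image is thus isomorphic to E / lin(W). *)
Definition quotmap (m : nat) (J : finType) (S : {set J}) (U : J -> 'rV[R]_m)
  : J -> 'rV[R]_m :=
  fun j => U j *m cokermx (\sum_(i in S) <<U i>>)%MS.

End Config.

From HB Require Import structures.
From mathcomp Require Import all_boot all_order all_algebra.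
From mathcomp Require Import boolp reals.
From mathcomp Require Import zify lra.
Set Implicit Arguments. Unset Strict Implicit. Unset Printing Implicit Defensive.
Import Order.TTheory GRing.Theory Num.Theory.
Local Open Scope ring_scope.

(* Write DDker A Z for the discrepancy of A over functionals vanishing on Z,
   so that DD(V) = DDker V 0 and DD(V/W) = DDker V W.  For flats Z <= Y <= A,
   DDker Y Z + DDker A Y <= DDker A Z: a maximizer for (A, Y) can be taken
   nonzero on A \ Y, and adding a small multiple of a maximizer for (Y, Z)
   adds the two sign sums.  Conversely, an optimal functional f can be moved,
   without creating sign changes, until its zero set spans a hyperplane flat Y
   of A, which splits f into a functional on Y and one vanishing on Y; hence
   DD(A) <= DD(Y) + DDker A Y.  Descending one hyperplane at a time to rank s
   and chaining both inequalities turns them into equalities. *)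

Section Signs.
Variable R : realFieldType.

Definition conform (x y : R) := (x == 0) || (sgz x == sgz y).

Lemma conform_sgz x y : conform x y -> x != 0 -> sgz x = sgz y.
Proof. by case/orP=> [/eqP-> /eqP | /eqP]. Qed.

Lemma conform_trans y x z : conform x y -> conform y z -> conform x z.
Proof.
rewrite /conform => /orP[-> // | /eqP xy] /orP[/eqP y0 | /eqP yz].
  by rewrite -sgz_eq0 xy y0 sgz0 eqxx.
by rewrite xy yz eqxx orbT.
Qed.

Lemma sgz_addr_small (a x : R) : `|x| < `|a| -> sgz (a + x) = sgz a.
Proof.
have := ler_norm x; have := ler_norm (- x); rewrite normrN.
case: (ltrgtP a 0) => [a_lt0 | a_gt0 | ->] ? ? lt_xa.
- by rewrite (ltr0_norm a_lt0) in lt_xa; rewrite !ltr0_sgz //; lra.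
- by rewrite (gtr0_norm a_gt0) in lt_xa; rewrite !gtr0_sgz //; lra.
- by move: lt_xa; rewrite normr0 ltNge normr_ge0.
Qed.

Lemma sgz_perturb (J : finType) (A : {set J}) (a b : J -> R) :
  exists2 e : R, 0 < e & forall j t, j \in A -> a j != 0 -> `|t| <= e ->
    sgz (a j + t * b j) = sgz (a j).
Proof.
set S := \sum_(j in A) `|b j| / `|a j|.
have S_ge0 : 0 <= S by apply: sumr_ge0 => j _; apply: divr_ge0.
exists (1 + S)^-1; first by rewrite invr_gt0; lra.
move=> j t jA aj0 le_te; apply: sgz_addr_small.
have a_gt0 : 0 < `|a j| by rewrite normr_gt0.
have le_baS : `|b j| <= S * `|a j|.
  rewrite -ler_pdivrMr // /S (bigD1 j) //= lerDl.
  by apply: sumr_ge0 => i _; apply: divr_ge0.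
rewrite normrM; apply: (@le_lt_trans _ _ ((1 + S)^-1 * `|b j|)).
  by rewrite ler_wpM2r.
rewrite mulrC ltr_pdivrMr; last lra.
have := normr_ge0 (b j); nra.
Qed.

Lemma conform_addr_step (a b t : R) : 0 < t -> (a = 0 -> b = 0) ->
  (a * b < 0 -> t * `|b| <= `|a|) -> conform (a + t * b) a.
Proof.
move=> t_gt0 ab0 le_ba; rewrite /conform.
case: (ltrgtP a 0) => [a_lt0 | a_gt0 | a0]; last by rewrite a0 (ab0 a0) mulr0 addr0 eqxx orbT.
- have : a + t * b <= 0.
    case: (lerP b 0) => b_le0; first nra.
    have ab_lt0 : a * b < 0 by nra.
    by have := le_ba ab_lt0; rewrite (ltr0_norm a_lt0) (gtr0_norm b_le0); nra.
  by rewrite le_eqVlt => /orP[-> // | s_lt0]; rewrite !ltr0_sgz ?eqxx ?orbT.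
- have : 0 <= a + t * b.
    case: (lerP 0 b) => b_ge0; first nra.
    have ab_lt0 : a * b < 0 by nra.
    by have := le_ba ab_lt0; rewrite (gtr0_norm a_gt0) (ltr0_norm b_ge0); nra.
  by rewrite le_eqVlt eq_sym => /orP[-> // | s_gt0]; rewrite !gtr0_sgz ?eqxx ?orbT.
Qed.

Lemma addr_ratio_eq0 (a b : R) : a * b < 0 -> a + `|a| / `|b| * b = 0.
Proof.
move=> ab_lt0; have b0 : b != 0 by apply: contraTneq ab_lt0 => ->; rewrite mulr0 ltxx.
case: (ltrgtP a 0) => [a_lt0 | a_gt0 | a0]; last by rewrite a0 mul0r ltxx in ab_lt0.
- have b_gt0 : 0 < b by nra.
  by rewrite (ltr0_norm a_lt0) (gtr0_norm b_gt0) divfK // addrN.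
- have b_lt0 : b < 0 by nra.
  by rewrite (gtr0_norm a_gt0) (ltr0_norm b_lt0) invrN mulrN mulNr divfK // addrN.
Qed.

(* [t] is the least ratio [|a j| / |b j|] over the coordinates that [b] pushes towards 0. *)
Lemma line_search (J : finType) (A : {set J}) (a b : J -> R) :
  (forall j, j \in A -> a j = 0 -> b j = 0) ->
  (exists2 j, j \in A & a j * b j < 0) ->
  exists t : R, (forall j, j \in A -> conform (a j + t * b j) (a j)) /\
    exists2 j, j \in A & (a j != 0) && (a j + t * b j == 0).
Proof.
move=> ab0 [j1 j1A ab1].
set P := [set j in A | a j * b j < 0].
have j1P : j1 \in P by rewrite inE j1A ab1.
have [j0 j0P t_min] := arg_minP (fun j => `|a j| / `|b j|) j1P.
have /setIdP[j0A ab_lt0] : j0 \in P := j0P.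
have a0 : a j0 != 0 by apply: contraTneq ab_lt0 => ->; rewrite mul0r ltxx.
have b0 : b j0 != 0 by apply: contraTneq ab_lt0 => ->; rewrite mulr0 ltxx.
exists (`|a j0| / `|b j0|); split; last first.
  by exists j0 => //; rewrite a0 (addr_ratio_eq0 ab_lt0) eqxx.
move=> j jA; apply: conform_addr_step; [by rewrite divr_gt0 ?normr_gt0 | exact: ab0 |].
move=> abj; have jP : j \in P by rewrite inE jA abj.
have bj0 : 0 < `|b j| by rewrite normr_gt0; apply: contraTneq abj => ->; rewrite mulr0 ltxx.
by rewrite -ler_pdivlMr //; apply: t_min.
Qed.

End Signs.

Section SeparatingFunctional.
Variable F : fieldType.

Lemma separating_functional m n (S : 'M[F]_(m, n)) (u : 'rV[F]_n) :
  ~~ (u <= S)%MS -> exists c : 'cV[F]_n, S *m c = 0 /\ (u *m c) ord0 ord0 != 0.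
Proof.
rewrite submxE => hu.
have [k uk] : exists k, (u *m cokermx S) ord0 k != 0.
  apply/existsP; apply: contraR hu; rewrite negb_exists => /forallP uS0.
  by apply/eqP/matrixP => i j; rewrite ord1 [RHS]mxE; apply/eqP/negbNE/uS0.
exists (cokermx S *m delta_mx k 0); split; first by rewrite mulmxA mulmx_coker mul0mx.
by rewrite mulmxA -colE mxE.
Qed.

Lemma mulmx_coker_ebase m n p (S : 'M[F]_(m, n)) (c : 'M[F]_(n, p)) :
  S *m c = 0 -> cokermx S *m (row_ebase S *m c) = c.
Proof.
move=> Sc0; have rbc0 : row_base S *m c = 0.
  have rbS : (row_base S <= S)%MS by rewrite eq_row_base.
  by rewrite -(mulmxKpV rbS) -mulmxA Sc0 mulmx0.
rewrite /cokermx /copid_mx -mulmxA mulmxBl mul1mx mulmxBr mulKmx ?row_ebase_unit //.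
rewrite -(@pid_mx_id _ n _ n _ (leqnn (\rank S))) -mulmxA (mulmxA (pid_mx _) (row_ebase S)).
by rewrite -/(row_base S) rbc0 !mulmx0 subr0.
Qed.

End SeparatingFunctional.

Lemma bigmax_ord_asboolP (N : nat) (P : nat -> Prop) : P 0%N ->
  (forall k, P k -> k <= N)%N ->
  P (\max_(k < N.+1 | `[< P k >]) k)%N /\
  forall k, P k -> (k <= \max_(k < N.+1 | `[< P k >]) k)%N.
Proof.
move=> P0 le_N; split.
  have : (0 < #|[pred k : 'I_N.+1 | `[< P k >]]|)%N.
    by apply/card_gt0P; exists ord0; rewrite inE; apply/asboolP.
  by case/(eq_bigmax_cond (fun k : 'I_N.+1 => val k)) => k; rewrite inE => /asboolP Pk ->.
move=> k Pk; have lt_kN : (k < N.+1)%N by rewrite ltnS le_N.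
exact: (@leq_bigmax_cond _ _ (fun k : 'I_N.+1 => val k) (Ordinal lt_kN)) (asboolT Pk).
Qed.

Lemma absz_le_mean (a b c : int) : a + b = c *+ 2 -> (`|c| <= `|a|)%N \/ (`|c| <= `|b|)%N.
Proof. lia. Qed.

Lemma leq_abszD (a b : int) : (`|(a + b)%R| <= `|a| + `|b|)%N.
Proof. lia. Qed.

Section Configuration.
Variables (R : realType) (n : nat) (I : finType) (V : I -> 'rV[R]_n).
Implicit Types (A Y Z W : {set I}) (c d g : 'cV[R]_n).

Definition fval (j : I) c : R := (V j *m c) ord0 ord0.
Definition vanish Z c := forall j, j \in Z -> fval j c = 0.
Definition sgsum A c : int := \sum_(j in A) sgz (fval j c).
Definition lin A : 'M[R]_n := (\sum_(j in A) <<V j>>)%MS.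
Definition zeros A c := [set j in A | fval j c == 0].
Definition flat A Y := forall j, j \in A -> j \notin Y -> ~~ (V j <= lin Y)%MS.
Definition conformal A g f := forall j, j \in A -> conform (fval j g) (fval j f).

Definition DDker A Z : nat :=
  (\max_(k < #|I|.+1 | `[< exists c, vanish Z c /\ disc A V c = k >]) k)%N.

Lemma fvalD j c d : fval j (c + d) = fval j c + fval j d.
Proof. by rewrite /fval mulmxDr mxE. Qed.

Lemma fvalZ j (a : R) c : fval j (a *: c) = a * fval j c.
Proof. by rewrite /fval -scalemxAr mxE. Qed.

Lemma fvalN j c : fval j (- c) = - fval j c.
Proof. by rewrite /fval mulmxN mxE. Qed.

Lemma disc_sgsum A c : disc A V c = `|sgsum A c|%N.
Proof.
have cardE (b : pred I) : #|[set j in A | b j]|%:Z = \sum_(j in A) (b j : nat)%:Z.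
  rewrite -sum1_card (big_morph Posz PoszD (erefl _)) big_mkcond [RHS]big_mkcond.
  by apply: eq_bigr => j _; rewrite !inE; case: (j \in A); case: (b j).
rewrite /disc /sgsum !cardE -sumrB; congr absz; apply: eq_bigr => j _.
by rewrite -/(fval j c); case: (ltrgtP (fval j c) 0) => [lt0 | gt0 | ->];
  rewrite ?(ltr0_sgz lt0) ?(gtr0_sgz gt0) ?sgz0.
Qed.

Lemma disc_le A c : (disc A V c <= #|I|)%N.
Proof.
have le_card (b : pred I) : (#|[set j in A | b j]| <= #|I|)%N by apply: max_card.
by rewrite /disc; have := le_card (fun j => 0 < fval j c);
  have := le_card (fun j => fval j c < 0); rewrite /fval; lia.
Qed.

Lemma disc_eq m A (U U' : I -> 'rV[R]_m) (c c' : 'cV[R]_m) :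
  (forall j, j \in A -> (U j *m c) ord0 ord0 = (U' j *m c') ord0 ord0) ->
  disc A U c = disc A U' c'.
Proof.
move=> eqUU'; rewrite /disc; congr (absz (Posz _ - Posz _)); apply: eq_card => j;
  by rewrite !inE; case jA: (j \in A); rewrite //= eqUU'.
Qed.

Lemma sgsum_setD A Y c : Y \subset A -> sgsum A c = sgsum Y c + sgsum (A :\: Y) c.
Proof. by move=> YA; rewrite /sgsum (big_setID Y) /= (setIidPr YA). Qed.

Lemma sgsum_vanish Y c : vanish Y c -> sgsum Y c = 0.
Proof. by move=> vY; rewrite /sgsum big1 // => j /vY ->; rewrite sgz0. Qed.

Lemma sgsumN A c : sgsum A (- c) = - sgsum A c.
Proof. by rewrite /sgsum -sumrN; apply: eq_bigr => j _; rewrite fvalN sgzN. Qed.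

Lemma sub_lin A j : j \in A -> (V j <= lin A)%MS.
Proof. by move=> jA; apply: (sumsmx_sup j) => //; rewrite genmxE. Qed.

Lemma lin_sub A m (M : 'M[R]_(m, n)) :
  (forall j, j \in A -> (V j <= M)%MS) -> (lin A <= M)%MS.
Proof. by move=> AM; apply/sumsmx_subP => j /AM; rewrite genmxE. Qed.

Lemma lin_subset A Y : A \subset Y -> (lin A <= lin Y)%MS.
Proof. by move=> AY; apply: lin_sub => j /(subsetP AY); apply: sub_lin. Qed.

Lemma vanish_lin Y c : vanish Y c <-> lin Y *m c = 0.
Proof.
split=> [vY | Yc0 j jY].
  apply/eqP; rewrite -sub_kermx; apply: lin_sub => j jY; rewrite sub_kermx.
  by apply/eqP/matrixP => i k; rewrite !ord1 [RHS]mxE; apply: vY.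
by have /submxP[x Vj] := sub_lin jY; rewrite /fval Vj -mulmxA Yc0 mulmx0 mxE.
Qed.

Lemma fval_lin Y c j : vanish Y c -> (V j <= lin Y)%MS -> fval j c = 0.
Proof.
by move=> /vanish_lin Yc0 /submxP[x Vj]; rewrite /fval Vj -mulmxA Yc0 mulmx0 mxE.
Qed.

Lemma separate_lin Y j : ~~ (V j <= lin Y)%MS -> exists c, vanish Y c /\ fval j c != 0.
Proof. by case/separating_functional => c [/vanish_lin vY jc]; exists c. Qed.

Lemma exists_nsub_lin A m (M : 'M[R]_(m, n)) : (\rank M < \rank (lin A))%N ->
  exists2 j, j \in A & ~~ (V j <= M)%MS.
Proof.
move=> lt_MA; apply/exists_inP; apply: contraLR lt_MA; rewrite negb_exists_in -leqNgt.
by move=> /forall_inP AM; apply/mxrankS/lin_sub => j /AM /negbNE.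
Qed.

Lemma DDkerP A Z : (exists c, vanish Z c /\ disc A V c = DDker A Z) /\
  forall c, vanish Z c -> (disc A V c <= DDker A Z)%N.
Proof.
have vanish0 Y : vanish Y 0 by apply/vanish_lin; rewrite mulmx0.
have P0 : exists c, vanish Z c /\ disc A V c = 0%N.
  by exists 0; rewrite disc_sgsum sgsum_vanish.
have le_I k : (exists c, vanish Z c /\ disc A V c = k) -> (k <= #|I|)%N.
  by case=> c [_ <-]; apply: disc_le.
have [[c [vc dc]] ub] := bigmax_ord_asboolP P0 le_I.
by split=> [|c' vc']; [exists c | apply: ub; exists c'].
Qed.

Lemma DDker_attained A Z : exists c, vanish Z c /\ disc A V c = DDker A Z.
Proof. exact: (DDkerP A Z).1. Qed.

Lemma DDker_ub A Z c : vanish Z c -> (disc A V c <= DDker A Z)%N.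
Proof. exact: (DDkerP A Z).2. Qed.

Lemma DD_DDker A : DD A V = DDker A set0.
Proof.
apply: eq_bigl => k; apply: asbool_equiv_eq.
by split=> [[c <-] | [c [_ <-]]]; exists c => //; split=> // j; rewrite inE.
Qed.

Lemma disc_setC W c : vanish W c -> disc setT V c = disc (~: W) V c.
Proof.
by move=> vW; rewrite !disc_sgsum (sgsum_setD c (subsetT W)) sgsum_vanish // add0r setTD.
Qed.

Lemma DD_quotmap W : DD (~: W) (quotmap W V) = DDker setT W.
Proof.
apply: eq_bigl => k; apply: asbool_equiv_eq; split=> [[c <-] | [c [vc <-]]].
  have vc' : vanish W (cokermx (lin W) *m c).
    move=> j jW; rewrite /fval mulmxA.
    have /eqP-> : V j *m cokermx (lin W) == 0 by rewrite -submxE sub_lin.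
    by rewrite mul0mx mxE.
  exists (cokermx (lin W) *m c); split=> //; rewrite (disc_setC vc').
  by apply: disc_eq => j _; rewrite /quotmap mulmxA.
exists (row_ebase (lin W) *m c); rewrite (disc_setC vc); apply: disc_eq => j _.
by rewrite /quotmap -/(lin W) -mulmxA mulmx_coker_ebase //; apply/vanish_lin.
Qed.

Lemma DDker_self A : DDker A A = 0%N.
Proof. by have [c [vc <-]] := DDker_attained A A; rewrite disc_sgsum sgsum_vanish. Qed.

Lemma sgsum_perturb_mean A g k (e : R) : 0 <= e ->
  (forall j t, j \in A -> fval j g != 0 -> `|t| <= e ->
     sgz (fval j g + t * fval j k) = sgz (fval j g)) ->
  sgsum A (g + e *: k) + sgsum A (g + (- e) *: k) = sgsum A g *+ 2.
Proof.
move=> e_ge0 he; rewrite /sgsum -big_split -sumrMnl; apply: eq_bigr => j jA /=.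
rewrite !fvalD !fvalZ; have [gj0 | gj] := eqVneq (fval j g) 0.
  by rewrite gj0 !add0r mulNr sgzN addrN sgz0 mul0rn.
by rewrite !he ?normrN ?ger0_norm.
Qed.

(* The sign sums of [g + e k] and [g - e k] average to that of [g], and
   neither vanishes at [j0]. *)
Lemma generic_maximizer_step A Y g j0 : flat A Y -> vanish Y g ->
  j0 \in zeros (A :\: Y) g -> exists g', [/\ vanish Y g',
    (`|sgsum A g| <= `|sgsum A g'|)%N & zeros (A :\: Y) g' \proper zeros (A :\: Y) g].
Proof.
move=> flY vg j0Z; have /setIdP[/setDP[j0A j0Y] /eqP gj0] := j0Z.
have [k [vk kj0]] := separate_lin (flY j0 j0A j0Y).
have [e e_gt0 he] := sgz_perturb A (fval^~ g) (fval^~ k).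
have [t abs_t le_gt] : exists2 t : R, `|t| = e &
    (`|sgsum A g| <= `|sgsum A (g + t *: k)|)%N.
  have mean := sgsum_perturb_mean (ltW e_gt0) he.
  case: (absz_le_mean mean) => [le_e | le_Ne].
  - by exists e; rewrite ?gtr0_norm.
  - by exists (- e); rewrite ?normrN ?gtr0_norm.
exists (g + t *: k); split=> //.
  by move=> j jY; rewrite fvalD fvalZ vg ?vk ?mulr0 ?addr0.
apply/properP; split.
  apply/subsetP => j /setIdP[jAY]; rewrite inE jAY /=; have /setDP[jA _] := jAY.
  apply: contraLR => gj.
  by rewrite fvalD fvalZ -sgz_eq0 he ?abs_t // sgz_eq0.
exists j0 => //; rewrite inE fvalD fvalZ gj0 add0r mulf_eq0 (negbTE kj0) orbF.
by rewrite -normr_eq0 abs_t gt_eqF ?andbF.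
Qed.

Lemma generic_maximizer A Y g : flat A Y -> vanish Y g -> exists g', [/\ vanish Y g',
  (`|sgsum A g| <= `|sgsum A g'|)%N & forall j, j \in A :\: Y -> fval j g' != 0].
Proof.
move=> flY; have [m] := ubnP #|zeros (A :\: Y) g|; elim: m g => // m IH g lt_m vg.
have [Z0 | [j0 j0Z]] := set_0Vmem (zeros (A :\: Y) g).
  exists g; split=> // j jAY; apply/eqP => gj0.
  have : j \in zeros (A :\: Y) g by rewrite inE jAY gj0 eqxx.
  by rewrite Z0 inE.
have [g1 [vg1 le_g1 ltZ]] := generic_maximizer_step flY vg j0Z.
have [|g' [vg' le_g' nz_g']] := IH g1 _ vg1.
  by apply: leq_trans (proper_card ltZ) _; rewrite -ltnS.
by exists g'; split=> //; apply: leq_trans le_g'.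
Qed.

Lemma sgsum_flip B c : exists2 c', c' = c \/ c' = - c & sgsum B c' = `|sgsum B c|%N.
Proof.
case: (lerP 0 (sgsum B c)) => [ge0 | lt0].
  by exists c; [left | rewrite abszE ger0_norm].
by exists (- c); [right | rewrite sgsumN abszE ltr0_norm].
Qed.

Lemma DDker_add_le A Y Z : Z \subset Y -> Y \subset A -> flat A Y ->
  (DDker Y Z + DDker A Y <= DDker A Z)%N.
Proof.
move=> ZY YA flY.
have [g0 [vg0 <-]] := DDker_attained A Y.
have [g1 [vg1 le_g1 nz_g1]] := generic_maximizer flY vg0.
have [h0 [vh0 <-]] := DDker_attained Y Z.
have [g /= eq_g sg] := sgsum_flip (A :\: Y) g1.
have [h /= eq_h sh] := sgsum_flip Y h0.
have vg : vanish Y g by case: eq_g => -> j /vg1; rewrite ?fvalN => ->; rewrite ?oppr0.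
have vh : vanish Z h by case: eq_h => -> j /vh0; rewrite ?fvalN => ->; rewrite ?oppr0.
have nz_g j : j \in A :\: Y -> fval j g != 0.
  by case: eq_g => -> /nz_g1; rewrite ?fvalN ?oppr_eq0.
have [e e_gt0 he] := sgz_perturb A (fval^~ g) (fval^~ h).
have vgh : vanish Z (g + e *: h).
  by move=> j jZ; rewrite fvalD fvalZ vh // vg ?(subsetP ZY) // mulr0 addr0.
apply: leq_trans (DDker_ub A vgh); rewrite !disc_sgsum (sgsum_setD (g + e *: h) YA).
have -> : sgsum Y (g + e *: h) = sgsum Y h.
  by apply: eq_bigr => j jY; rewrite fvalD fvalZ vg // add0r sgzM gtr0_sgz ?mul1r.
have -> : sgsum (A :\: Y) (g + e *: h) = sgsum (A :\: Y) g.
  apply: eq_bigr => j jAY; have /setDP[jA _] := jAY.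
  by rewrite fvalD fvalZ he ?nz_g ?gtr0_norm.
rewrite sh sg -PoszD absz_nat leq_add2l (leq_trans le_g1) //.
by rewrite (sgsum_setD g1 YA) sgsum_vanish ?add0r.
Qed.

Lemma zeros_vanish A g : vanish (zeros A g) g.
Proof. by move=> j /setIdP[_ /eqP]. Qed.

Lemma zeros_subset A g : zeros A g \subset A.
Proof. by apply/subsetP => j /setIdP[]. Qed.

Lemma flat_zeros A g : flat A (zeros A g).
Proof.
move=> j jA; apply: contra => /(fval_lin (@zeros_vanish A g)) gj0.
by rewrite inE jA gj0 eqxx.
Qed.

Lemma flat_trans A Y W : W \subset Y -> flat A Y -> flat Y W -> flat A W.
Proof.
move=> WY flY flW j jA jW; have [jY | jY] := boolP (j \in Y); first exact: flW.
by apply: contra (flY j jA jY) => /submx_trans; apply; apply: lin_subset.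
Qed.

Lemma rank_zeros_lt A g : (exists2 j, j \in A & fval j g != 0) ->
  (\rank (lin (zeros A g)) < \rank (lin A))%N.
Proof.
case=> j jA gj; apply: rank_ltmx; rewrite ltmxE lin_subset ?zeros_subset //=.
by apply: contra gj => /(submx_trans (sub_lin jA)) /(fval_lin (@zeros_vanish A g)) ->.
Qed.

Lemma rank_lin_setU1 j Z : (\rank (lin (j |: Z)) <= (\rank (lin Z)).+1)%N.
Proof.
have : (lin (j |: Z) <= <<V j>> + lin Z)%MS.
  apply: lin_sub => i /setU1P[-> | iZ]; first by rewrite -genmxE addsmxSl.
  by apply: submx_trans (addsmxSr _ _); apply: sub_lin.
move/mxrankS/leq_trans; apply; apply: leq_trans (mxrank_adds_leqif _ _).1 _.
by rewrite mxrank_gen; have := rank_leq_row (V j); lia.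
Qed.

Lemma conformal_trans A g h f : conformal A g h -> conformal A h f -> conformal A g f.
Proof. by move=> gh hf j jA; apply: conform_trans (gh j jA) (hf j jA). Qed.

(* Move [g] along a functional vanishing on its zeros and at [j0] until a new
   zero, outside the span of the old ones, appears. *)
Lemma hyperplane_step A g j0 : j0 \in A -> fval j0 g != 0 ->
  ((\rank (lin (zeros A g))).+1 < \rank (lin A))%N ->
  exists g', [/\ conformal A g' g, fval j0 g' != 0 &
    (\rank (lin (zeros A g)) < \rank (lin (zeros A g')))%N].
Proof.
move=> j0A gj0 lt_rank; set Z := zeros A g.
have [v vA vZ] : exists2 v, v \in A & ~~ (V v <= lin (j0 |: Z))%MS.
  exact/exists_nsub_lin/(leq_ltn_trans (rank_lin_setU1 j0 Z)).
have gv : fval v g != 0.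
  by apply: contra vZ => gv0; apply: sub_lin; rewrite !inE vA gv0 orbT.
have [d vd gd_lt0] : exists2 d, vanish (j0 |: Z) d & fval v g * fval v d < 0.
  have [d0 [vd0 dv0]] := separate_lin vZ.
  have : fval v g * fval v d0 != 0 by rewrite mulf_neq0.
  rewrite neq_lt => /orP[lt0 | gt0]; [by exists d0 | exists (- d0)].
    by move=> j /vd0; rewrite fvalN => ->; rewrite oppr0.
  by rewrite fvalN mulrN oppr_lt0.
have dZ j : j \in Z -> fval j d = 0 by move=> jZ; apply: vd; rewrite setU1r.
have [|t [conf_t [js jsA /andP[gjs gdjs]]]] :=
  line_search (a := fval^~ g) (b := fval^~ d) _ (ex_intro2 _ _ v vA gd_lt0).
  by move=> j jA gj0'; apply: dZ; rewrite inE jA gj0' eqxx.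
exists (g + t *: d); split.
- by move=> j jA; rewrite fvalD fvalZ; apply: conf_t.
- by rewrite fvalD fvalZ (vd j0 (setU11 _ _)) mulr0 addr0.
apply: rank_ltmx; rewrite ltmxE lin_subset /=.
  have jsZ : js \notin Z by rewrite inE negb_and gjs orbT.
  apply: contra (flat_zeros jsA jsZ) => /(submx_trans _); apply; apply: sub_lin.
  by rewrite inE jsA fvalD fvalZ.
apply/subsetP => j jZ; have /setIdP[jA /eqP gj] := jZ.
by rewrite inE jA fvalD fvalZ gj dZ // mulr0 addr0 eqxx.
Qed.

Lemma hyperplane_refinement A g j0 : j0 \in A -> fval j0 g != 0 ->
  exists g', conformal A g' g /\ \rank (lin (zeros A g')) = (\rank (lin A)).-1.
Proof.
move=> j0A; have [m] := ubnP (\rank (lin A) - \rank (lin (zeros A g))).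
elim: m g => // m IH g lt_m gj0.
have lt_r := rank_zeros_lt (ex_intro2 _ _ j0 j0A gj0).
case: (ltnP (\rank (lin (zeros A g))).+1 (\rank (lin A))) => [lt_r1 | ge_r1].
  have [g1 [conf1 g1j0 lt_g1]] := hyperplane_step j0A gj0 lt_r1.
  have [|g' [conf' rg']] := IH g1 _ g1j0; first lia.
  by exists g'; split=> //; apply: conformal_trans conf' conf1.
by exists g; split; [move=> j _; rewrite /conform eqxx orbT | lia].
Qed.

Lemma conformal_split A f g : conformal A g f ->
  (disc A V f <= DDker (zeros A g) set0 + DDker A (zeros A g))%N.
Proof.
move=> gf; set Y := zeros A g; have YA : Y \subset A := zeros_subset A g.
have vanish0 c : vanish set0 c by move=> j; rewrite inE.
rewrite disc_sgsum (sgsum_setD f YA); apply: leq_trans (leq_abszD _ _) _.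
apply: leq_add; first by rewrite -disc_sgsum DDker_ub.
have -> : sgsum (A :\: Y) f = sgsum A g.
  rewrite (sgsum_setD g YA) (sgsum_vanish (@zeros_vanish A g)) add0r.
  apply: eq_bigr => j /setDP[jA jY]; apply/esym/conform_sgz; first exact: gf.
  by apply: contra jY => gj0; rewrite inE jA gj0.
by rewrite -disc_sgsum; apply/DDker_ub/zeros_vanish.
Qed.

Lemma DD_hyperplane_split A : (0 < \rank (lin A))%N ->
  exists Y, [/\ Y \subset A, flat A Y, \rank (lin Y) = (\rank (lin A)).-1 &
    (DDker A set0 <= DDker Y set0 + DDker A Y)%N].
Proof.
move=> rA_gt0; have [f [_ df]] := DDker_attained A set0.
have [g0 [j0 j0A g0j0] split_g0] : exists2 g0, exists2 j0, j0 \in A & fval j0 g0 != 0 &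
    forall g, conformal A g g0 ->
      (DDker A set0 <= DDker (zeros A g) set0 + DDker A (zeros A g))%N.
  case: (boolP [exists j in A, fval j f != 0]) => [/exists_inP[j0 j0A fj0] | /exists_inPn f0].
    by exists f; [exists j0 | move=> g gf; rewrite -df; apply: conformal_split].
  have [j0 j0A Vj0] : exists2 j0, j0 \in A & ~~ (V j0 <= (0 : 'M[R]_n))%MS.
    by apply: exists_nsub_lin; rewrite mxrank0.
  have [c [_ cj0]] := separating_functional Vj0.
  exists c => [|g _]; first by exists j0.
  by rewrite -df disc_sgsum sgsum_vanish // => j /f0 /negbNE /eqP.
have [g [gg0 rg]] := hyperplane_refinement j0A g0j0.
by exists (zeros A g); split; [apply: zeros_subset | apply: flat_zeros | | apply: split_g0].
Qed.

Lemma DD_split_flat k A s : \rank (lin A) = (s + k)%N ->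
  exists W, [/\ W \subset A, flat A W, \rank (lin W) = s &
    DDker A set0 = (DDker W set0 + DDker A W)%N].
Proof.
elim: k A => [|k IH] A rA.
  by exists A; split=> //; [move=> j -> | rewrite rA addn0 | rewrite DDker_self addn0].
have [|Y [YA flY rY leY]] := DD_hyperplane_split (A := A); first by rewrite rA addnS.
have [|W [WY flW rW eqW]] := IH Y; first by rewrite rY rA addnS.
have flAW := flat_trans WY flY flW.
exists W; split=> //; first exact: subset_trans WY YA.
have := DDker_add_le WY YA flY.
have := DDker_add_le (sub0set W) (subset_trans WY YA) flAW.
lia.
Qed.

End Configuration.

Theorem mainTheorem13 (R : realType) (n : nat) (I : finType)
  (V : I -> 'rV[R]_n) (s : nat) :
  (1 <= s)%N -> (s <= (crank [set: I] V).-1)%N ->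
  exists W : {set I},
    crank W V = s /\
    DD [set: I] V = (DD W V + DD (~: W) (quotmap W V))%N.
Proof.
move=> _ le_s_r.
have r_split : \rank (lin V [set: I]) = (s + (crank [set: I] V - s))%N.
  by rewrite -[\rank _]/(crank [set: I] V); lia.
have [W [_ _ rW splitW]] := DD_split_flat r_split.
by exists W; split; [exact: rW | rewrite DD_quotmap !DD_DDker].
Qed.
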